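(* Let $(\mathcal{A},\tau)$ be a tracial $W^*$-probability space, $X$ a topological space, and $u_1,u_2:X\to\mathcal{A}$ functions continuous with respect to the operator norm on $\mathcal{A}$, such that for every $x\in X$: $u_1(x)$ and $u_2(x)$ are $*$-free, $\tau(u_1(x))=\tau(u_2(x))=0$, and $1_{\mathcal{A}}-u_1(x)u_2(x)$ is invertible in $\mathcal{A}$. Then the set \[Y=\{x\in X:\|u_1(x)\|_2\|u_2(x)\|_2<1\}\] is both open and closed in $X$. In particular, if $X$ is connected, then either $Y=X$ or $Y=\varnothing$.
   Context: A tracial $W^*$-probability space is a von Neumann algebra $\mathcal{A}$ with a faithful normal trace $\tau$ satisfying $\tau(1_{\mathcal{A}})=1$. $\|a\|_2=\tau(a^*a)^{1/2}$. Elements $a,b$ are $*$-free if the unital $*$-algebras they generate are freely independent with respect to $\tau$. *)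

From HB Require Import structures.
From mathcomp Require Import all_boot all_order all_algebra.
From mathcomp Require Import complex.
From mathcomp Require Import all_classical all_reals.
From mathcomp Require Import topology.
Set Implicit Arguments. Unset Strict Implicit. Unset Printing Implicit Defensive.
Import Order.TTheory GRing.Theory Num.Theory.
Local Open Scope ring_scope.
Local Open Scope complex_scope.

(* A tracial W*-probability space is presented abstractly (Sakai/Kadison):
   a complex unital *-algebra A (an algType over C = R[i]) with a norm [nrm],
   an involution [star] and a trace [tau], such that A is a C*-algebra
   (Banach *-algebra with the C*-identity) which is monotone complete, and
   tau is a faithful normal tracial state.  By Kadison's theorem, a C*-algebra
   is a W*-algebra iff it is monotone complete and has a separating family of
   normal states; a faithful normal state is such a family. *)

Section Defs.
Variables (R : realType) (A : algType R[i]).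
Variables (star : A -> A) (nrm : A -> R) (tau : A -> R[i]).

Definition opp_le (a b : A) : Prop := exists c, b - a = star c * c.

Definition selfadjoint (a : A) : Prop := star a = a.

Definition is_star_algebra : Prop :=
  [/\ forall a, star (star a) = a,
      forall a b, star (a + b) = star a + star b,
      forall (c : R[i]) a, star (c *: a) = (c^*)%C *: star a,
      forall a b, star (a * b) = star b * star a
    & star 1 = 1].

Definition is_Cstar_norm : Prop :=
  (forall a, 0 <= nrm a) /\
  (forall a, nrm a = 0 -> a = 0) /\
  (forall a b, nrm (a + b) <= nrm a + nrm b) /\
  (forall (c : R[i]) a, nrm (c *: a) = Normc.normc c * nrm a) /\
  (forall a b, nrm (a * b) <= nrm a * nrm b) /\
  (forall a, nrm (star a * a) = nrm a ^+ 2).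

Definition norm_complete : Prop :=
  forall u : nat -> A,
    (forall e : R, 0 < e -> exists N, forall m n, (N <= m)%N -> (N <= n)%N ->
        nrm (u m - u n) < e) ->
    exists l, forall e : R, 0 < e -> exists N, forall n, (N <= n)%N ->
        nrm (u n - l) < e.

Definition directed_set (I : Type) (le : I -> I -> Prop) : Prop :=
  [/\ inhabited I, forall i, le i i,
      forall i j k, le i j -> le j k -> le i k
    & forall i j, exists k, le i k /\ le j k].

Definition bounded_incr_net (I : Type) (le : I -> I -> Prop) (a : I -> A) : Prop :=
  [/\ directed_set le, forall i, selfadjoint (a i),
      forall i j, le i j -> opp_le (a i) (a j)
    & exists M : A, forall i, opp_le (a i) M].

Definition is_sup_net (I : Type) (a : I -> A) (s : A) : Prop :=
  selfadjoint s /\ (forall i, opp_le (a i) s) /\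
  (forall b, selfadjoint b -> (forall i, opp_le (a i) b) -> opp_le s b).

Definition monotone_complete_normal : Prop :=
  forall (I : Type) (le : I -> I -> Prop) (a : I -> A),
    bounded_incr_net le a ->
    exists s, is_sup_net a s /\
      (forall i, tau (a i) <= tau s) /\
      (forall c : R[i], (forall i, tau (a i) <= c) -> tau s <= c).

Definition faithful_tracial_state : Prop :=
  (forall a b, tau (a + b) = tau a + tau b) /\
  (forall (c : R[i]) a, tau (c *: a) = c * tau a) /\
  [/\ tau 1 = 1,
      forall a b, tau (a * b) = tau (b * a),
      forall a, 0 <= tau (star a * a)
    & forall a, tau (star a * a) = 0 -> a = 0].

Definition tracial_Wstar_probability_space : Prop :=
  [/\ is_star_algebra, is_Cstar_norm, norm_complete,
      faithful_tracial_state & monotone_complete_normal].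

Definition norm2 (a : A) : R := Num.sqrt (complex.Re (tau (star a * a))).

Definition invertible (a : A) : Prop := exists b, a * b = 1 /\ b * a = 1.

Inductive in_star_alg (a : A) : A -> Prop :=
  | sa_one : in_star_alg a 1
  | sa_gen : in_star_alg a a
  | sa_star : in_star_alg a (star a)
  | sa_add x y : in_star_alg a x -> in_star_alg a y -> in_star_alg a (x + y)
  | sa_scale (c : R[i]) x : in_star_alg a x -> in_star_alg a (c *: x)
  | sa_mul x y : in_star_alg a x -> in_star_alg a y -> in_star_alg a (x * y).

Definition star_free (a b : A) : Prop :=
  forall (n : nat) (side : 'I_n.+1 -> bool) (p : 'I_n.+1 -> A),
    (forall k : 'I_n.+1, forall Hk : (k.+1 < n.+1)%N,
        side k != side (Ordinal Hk)) ->
    (forall k, in_star_alg (if side k then a else b) (p k)) ->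
    (forall k, tau (p k) = 0) ->
    tau (\prod_(k < n.+1) p k) = 0.

Definition norm_continuous (X : topologicalType) (u : X -> A) : Prop :=
  forall x (e : R), 0 < e -> \forall y \near x, nrm (u y - u x) < e.

End Defs.

From HB Require Import structures.
From mathcomp Require Import all_boot all_order all_algebra.
From mathcomp Require Import complex.
From mathcomp Require Import all_classical all_reals.
From mathcomp Require Import topology normedtype sequences.
From mathcomp Require Import ring lra.
From Pilot Require Import Defs. (* last: normedtype also exports a [norm_continuous] *)
Import Order.TTheory GRing.Theory Num.Theory.
Set Implicit Arguments. Unset Strict Implicit. Unset Printing Implicit Defensive.
Local Open Scope classical_set_scope.
Local Open Scope complex_scope.
Local Open Scope ring_scope.

(* Write a = u1 x, b = u2 x and P = a b. Freeness and centredness give the moments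
   tau (P*^m P^n) = (||a||_2^2 ||b||_2^2)^n [m = n], so if ||a||_2 ||b||_2 = 1 the powers of P
   are orthonormal for the trace inner product and the geometric sums S_N of P satisfy
   ||S_N||_2^2 = N. If c is the inverse of 1 - P, then S_N = c (1 - P^N) has 2-norm bounded
   independently of N, a contradiction. Hence x |-> ||u1 x||_2^2 ||u2 x||_2^2, which is continuous
   for the operator norm, never takes the value 1, and Y is the preimage of both the open set
   (-oo, 1) and the closed set (-oo, 1]. The only operator-theoretic input is
   ||c y||_2 <= sqrt 2 ||c|| ||y||_2, for which 1 - c* c / (2 ||c||^2) gets a square root from a
   Banach fixed-point iteration in the complete normed algebra. *)

Lemma Re_realM (R : realType) (r : R) (x : R[i]) : complex.Re (r%:C * x) = r * complex.Re x.
Proof. by case: x => a b /=; rewrite mul0r subr0. Qed.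

Lemma normc_real (R : realType) (r : R) : 0 <= r -> Normc.normc r%:C = r.
Proof. by move=> r0; rewrite /Normc.normc /= expr0n addr0 sqrtr_sqr ger0_norm. Qed.

Lemma morph_add0 (U V : zmodType) (f : U -> V) : {morph f : x y / x + y} -> f 0 = 0.
Proof. by move=> fD; apply: (addrI (f 0)); rewrite -fD !addr0. Qed.

Lemma morph_addN (U V : zmodType) (f : U -> V) :
  {morph f : x y / x + y} -> {morph f : x / - x}.
Proof. by move=> fD x; apply: (addrI (f x)); rewrite -fD !subrr (morph_add0 fD). Qed.

Lemma clopen_preimage_lt (T : topologicalType) (R : realType) (g : T -> R^o) (r : R) :
  continuous g -> (forall x, g x != r) -> clopen (g @^-1` [set y | y < r]).
Proof.
move=> g_cont g_neq; split; first by apply: open_comp => [x _|]; [exact: g_cont | exact: open_lt].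
have -> : g @^-1` [set y | y < r] = g @^-1` [set y | y <= r].
  by apply/seteqP; split=> x /=; rewrite le_eqVlt (negbTE (g_neq x)).
by apply: preimage_closed => [x _|]; [exact: g_cont | exact: closed_le].
Qed.

Lemma connected_clopen (T : topologicalType) (Y : set T) :
  connected [set: T] -> clopen Y -> Y = [set: T] \/ Y = set0.
Proof.
move=> T_connected [Y_open Y_closed]; have [[x Yx]|Y0] := pselect (Y !=set0).
  by left; apply: T_connected; [exists x | exists Y; rewrite ?setTI..].
by right; apply/seteqP; split=> x // Yx; apply: Y0; exists x.
Qed.

Section TracialCstarAlgebra.
Variables (R : realType) (A : algType R[i]).
Variables (star : A -> A) (nrm : A -> R) (tau : A -> R[i]).
Hypotheses (Hstar : is_star_algebra star) (Hnrm : is_Cstar_norm star nrm).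
Hypotheses (Hcomplete : norm_complete nrm) (Htau : faithful_tracial_state star tau).

Lemma starK : involutive star. Proof. by case: Hstar => + _ _ _ _; apply. Qed.
Lemma starD : {morph star : a b / a + b}. Proof. by case: Hstar => _ + _ _ _; apply. Qed.
Lemma starZ (c : R[i]) a : star (c *: a) = (c^*)%C *: star a.
Proof. by case: Hstar => _ _ + _ _; apply. Qed.
Lemma starM a b : star (a * b) = star b * star a. Proof. by case: Hstar => _ _ _ + _; apply. Qed.
Lemma star1 : star 1 = 1. Proof. by case: Hstar. Qed.

Lemma star0 : star 0 = 0. Proof. exact: morph_add0 starD. Qed.
Lemma starN : {morph star : a / - a}. Proof. exact: morph_addN starD. Qed.
Lemma starB a b : star (a - b) = star a - star b. Proof. by rewrite starD starN. Qed.
Lemma starZr (r : R) a : star (r%:C *: a) = r%:C *: star a. Proof. by rewrite starZ conjc_real. Qed.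
Lemma starX a n : star (a ^+ n) = star a ^+ n.
Proof. by elim: n => [|n IH]; rewrite ?star1 // exprS starM IH exprSr. Qed.
Lemma star_sum I (r : seq I) (P : pred I) (F : I -> A) :
  star (\sum_(i <- r | P i) F i) = \sum_(i <- r | P i) star (F i).
Proof. exact: (big_morph _ starD star0). Qed.

Lemma tauD : {morph tau : a b / a + b}. Proof. by case: Htau. Qed.
Lemma tauZ (c : R[i]) a : tau (c *: a) = c * tau a. Proof. by case: Htau => _ []. Qed.
Lemma tau1 : tau 1 = 1. Proof. by case: Htau => _ [_ []]. Qed.
Lemma tau_ge0 a : 0 <= tau (star a * a). Proof. by case: Htau => _ [_ []]. Qed.

Lemma tau0 : tau 0 = 0. Proof. exact: morph_add0 tauD. Qed.
Lemma tauN : {morph tau : a / - a}. Proof. exact: morph_addN tauD. Qed.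
Lemma tauB a b : tau (a - b) = tau a - tau b. Proof. by rewrite tauD tauN. Qed.
Lemma tau_sum I (r : seq I) (P : pred I) (F : I -> A) :
  tau (\sum_(i <- r | P i) F i) = \sum_(i <- r | P i) tau (F i).
Proof. exact: (big_morph _ tauD tau0). Qed.

Lemma tau_star a : tau (star a) = ((tau a)^*)%C.
Proof.
have /ger0_Im := tau_ge0 (a + 1).
have /ger0_Im := tau_ge0 (a + 'i *: 1).
rewrite !starD starZ star1 !mulrDl !mulrDr -!scalerAl -!scalerAr !mulr1 !mul1r.
rewrite !tauD !tauZ tau1 !raddfD /= (ger0_Im (tau_ge0 a)).
by case: (tau a) => x y; case: (tau (star a)) => x' y' /= h1 h2; congr (_ +i* _); lra.
Qed.

Definition sqnorm2 a := complex.Re (tau (star a * a)).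

Lemma sqnorm2_ge0 a : 0 <= sqnorm2 a.
Proof. by have := tau_ge0 a; rewrite lecE => /andP[]. Qed.

Lemma tau_sqnorm2 a : tau (star a * a) = (sqnorm2 a)%:C.
Proof. by rewrite RRe_real // ger0_real // tau_ge0. Qed.

Lemma nrm_ge0 a : 0 <= nrm a. Proof. by case: Hnrm. Qed.
Lemma nrm_eq0 a : nrm a = 0 -> a = 0. Proof. by case: Hnrm => _ [+ _]; apply. Qed.
Lemma nrm_triangle a b : nrm (a + b) <= nrm a + nrm b.
Proof. by case: Hnrm => _ [_ [+ _]]; apply. Qed.
Lemma nrmZ (c : R[i]) a : nrm (c *: a) = Normc.normc c * nrm a.
Proof. by case: Hnrm => _ [_ [_ [+ _]]]; apply. Qed.
Lemma nrm_subm a b : nrm (a * b) <= nrm a * nrm b.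
Proof. by case: Hnrm => _ [_ [_ [_ [+ _]]]]; apply. Qed.
Lemma nrm_Cstar a : nrm (star a * a) = nrm a ^+ 2.
Proof. by case: Hnrm => _ [_ [_ [_ [_ +]]]]; apply. Qed.

Lemma nrmZr (r : R) a : 0 <= r -> nrm (r%:C *: a) = r * nrm a.
Proof. by move=> r0; rewrite nrmZ normc_real. Qed.
Lemma nrm0 : nrm 0 = 0. Proof. by rewrite -(scale0r 0) nrmZr ?mul0r. Qed.
Lemma nrmN a : nrm (- a) = nrm a.
Proof. by rewrite -scaleN1r nrmZ normcN Normc.normc1 mul1r. Qed.
Lemma nrm_distC a b : nrm (a - b) = nrm (b - a). Proof. by rewrite -nrmN opprB. Qed.

Lemma nrm_star a : nrm (star a) = nrm a.
Proof.
suff nrm_le_star b : nrm b <= nrm (star b).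
  by apply/eqP; rewrite eq_le nrm_le_star -{2}(starK a) nrm_le_star.
have [->|b0] := eqVneq (nrm b) 0; first exact: nrm_ge0.
have := nrm_subm (star b) b; rewrite nrm_Cstar expr2.
by rewrite ler_pM2r // lt0r b0 nrm_ge0.
Qed.

Lemma nrm1 : nrm 1 = 1.
Proof.
have one_neq0 : (1 : A) != 0.
  by apply/eqP => A_trivial; move: tau1; rewrite A_trivial tau0 => /eqP; rewrite eq_sym oner_eq0.
have n1 : nrm 1 != 0 by apply: contra_neq one_neq0 => /nrm_eq0.
by apply: (mulIf n1); rewrite mul1r -expr2 -nrm_Cstar star1 mulr1.
Qed.

Lemma nrm_lt_eps_eq0 a : (forall e, 0 < e -> nrm a < e) -> a = 0.
Proof.
move=> small; apply: nrm_eq0; apply/eqP; rewrite eq_le nrm_ge0 andbT.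
by apply/ler_addgt0Pr => e /small/ltW; rewrite add0r.
Qed.

Definition nrm_cvg (z : nat -> A) (l : A) :=
  forall e, 0 < e -> \forall n \near \oo, nrm (z n - l) < e.

Lemma nrm_cvg_unique z l l' : nrm_cvg z l -> nrm_cvg z l' -> l = l'.
Proof.
move=> zl zl'; apply/eqP; rewrite -subr_eq0; apply/eqP/nrm_lt_eps_eq0 => e e0.
have e2 : 0 < e / 2 by rewrite divr_gt0.
near \oo => n.
have -> : l - l' = (z n - l') - (z n - l) by rewrite opprB [in RHS]addrC addrA subrK.
rewrite (splitr e); apply: le_lt_trans (nrm_triangle _ _) _; rewrite nrmN ltrD //.
  by near: n; apply: zl'.
by near: n; apply: zl.
Unshelve. all: by end_near.
Qed.

Lemma nrm_cvg_selfadjoint z l : (forall n, star (z n) = z n) -> nrm_cvg z l -> star l = l.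
Proof.
move=> zs zl; apply: (nrm_cvg_unique _ zl) => e /zl; apply: filterS => n.
by rewrite -[X in _ -> X < _]nrm_star starB starK zs.
Qed.

Lemma nrm_cvg_le z l r : (forall n, nrm (z n) <= r) -> nrm_cvg z l -> nrm l <= r.
Proof.
move=> zr zl; apply/ler_addgt0Pr => e /zl [N _ zlN].
have := zlN N (leqnn N); rewrite nrm_distC => lzN.
have -> : l = (l - z N) + z N by rewrite subrK.
by apply: le_trans (nrm_triangle _ _) _; rewrite addrC lerD // ltW.
Qed.

Lemma nrm_geometric_cauchy z (C q : R) : 0 <= q < 1 ->
  (forall n, nrm (z n.+1 - z n) <= C * q ^+ n) -> exists l, nrm_cvg z l.
Proof.
case/andP=> q_ge0 q_lt1 zstep.
have q'_gt0 : 0 < 1 - q by rewrite subr_gt0.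
have C_ge0 : 0 <= C by have := zstep 0%N; rewrite expr0 mulr1; apply: le_trans (nrm_ge0 _).
have dist_shift n k : (1 - q) * nrm (z (n + k)%N - z n) <= C * (q ^+ n - q ^+ (n + k)).
  elim: k => [|k IH]; first by rewrite addn0 !subrr nrm0 !mulr0.
  have -> : z (n + k.+1)%N - z n = (z (n + k).+1 - z (n + k)%N) + (z (n + k)%N - z n).
    by rewrite addnS addrA subrK.
  apply: le_trans (ler_wpM2l (ltW q'_gt0) (nrm_triangle _ _)) _.
  have := ler_wpM2l (ltW q'_gt0) (zstep (n + k)%N).
  by rewrite mulrDr addnS exprSr; move: IH; nra.
have dist_le N m n : (N <= m)%N -> (N <= n)%N -> (1 - q) * nrm (z m - z n) <= C * q ^+ N.
  wlog nm : m n / (n <= m)%N => [hwlog|Nm Nn].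
    by case/orP: (leq_total n m) => ? Nm Nn; [|rewrite nrm_distC]; apply: hwlog.
  rewrite -(subnKC nm); apply: le_trans (dist_shift _ _) _.
  rewrite ler_wpM2l // lerBlDr -(subnKC Nn) !exprD ler_wpDr ?mulr_ge0 ?exprn_ge0 //.
  by rewrite ler_piMr ?exprn_ge0 // exprn_ile1 // ltW.
have [l zl] : exists l, forall e, 0 < e -> exists N, forall n, (N <= n)%N -> nrm (z n - l) < e.
  apply: Hcomplete => e e_gt0.
  have eq_gt0 : 0 < e * (1 - q) by rewrite mulr_gt0.
  have q_norm_lt1 : `|q| < 1 by rewrite ger0_norm.
  have [N _ CqN_lt] := @cvgr_distC_lt _ R^o _ _ _ _ _ (cvg_geometric C q_norm_lt1) _ eq_gt0.
  exists N => m n Nm Nn; rewrite -(ltr_pM2r q'_gt0) mulrC.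
  apply: le_lt_trans (dist_le _ _ _ Nm Nn) _.
  by have := CqN_lt N (leqnn N); rewrite /= subr0; apply: le_lt_trans; apply: ler_norm.
by exists l => e /zl [N zlN]; exists N.
Qed.

Lemma contraction_fixpoint (B : set A) (F : A -> A) (q : R) (x0 : A) :
  0 <= q < 1 -> (forall z l, (forall n, B (z n)) -> nrm_cvg z l -> B l) ->
  B x0 -> (forall x, B x -> B (F x)) ->
  (forall x y, B x -> B y -> nrm (F x - F y) <= q * nrm (x - y)) ->
  exists2 l, B l & F l = l.
Proof.
move=> q01 B_closed Bx0 FB F_contr; have /andP[q0 q1] := q01.
pose z n := iter n F x0.
have Bz n : B (z n) by elim: n => //= n; apply: FB.
have zstep n : nrm (z n.+1 - z n) <= nrm (z 1%N - z 0%N) * q ^+ n.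
  elim: n => [|n IH]; first by rewrite mulr1.
  apply: le_trans (F_contr (z n.+1) (z n) (Bz _) (Bz _)) _.
  by rewrite exprS mulrCA ler_wpM2l.
have [l zl] := nrm_geometric_cauchy q01 zstep.
exists l; first exact: B_closed zl.
apply: (nrm_cvg_unique (z := z \o S)); last first.
  by move=> e /zl [N _ zlN]; exists N => // n Nn; exact: (zlN n.+1 (leqW Nn)).
move=> e /zl [N _ zlN]; exists N => // n /zlN zln /=.
apply: le_lt_trans (F_contr _ _ (Bz _) (B_closed _ _ Bz zl)) _.
by apply: le_lt_trans _ zln; rewrite ler_piMl ?nrm_ge0 // ltW.
Qed.

(* l is the fixed point of x |-> (s + x^2)/2, a contraction of the self-adjoint part of the
   ball of radius 1/2; then (1 - l)^2 = 1 - s. *)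
Lemma selfadjoint_sqr_fixpoint s : star s = s -> nrm s <= 2^-1 ->
  exists2 l, star l = l & l + l = s + l * l.
Proof.
move=> s_sa s_le.
have half_ge0 : (0 : R) <= 2^-1 by rewrite invr_ge0.
pose half : R[i] := (2^-1)%:C.
have nrm_half a : nrm (half *: a) = 2^-1 * nrm a by rewrite nrmZr.
pose B x := star x = x /\ nrm x <= 2^-1.
pose F x := half *: (s + x * x).
have B_closed z l : (forall n, B (z n)) -> nrm_cvg z l -> B l.
  move=> Bz zl; split; first exact: nrm_cvg_selfadjoint (fun n => (Bz n).1) zl.
  exact: nrm_cvg_le (fun n => (Bz n).2) zl.
have B0 : B 0 by split; [exact: star0 | rewrite nrm0].
have FB x : B x -> B (F x).
  move=> [x_sa x_le]; split; first by rewrite starZr starD starM x_sa s_sa.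
  have x2_le := nrm_subm x x; have x_ge0 := nrm_ge0 x.
  by rewrite nrm_half; apply: le_trans (ler_wpM2l half_ge0 (nrm_triangle _ _)) _; nra.
have F_contr a b : B a -> B b -> nrm (F a - F b) <= 2^-1 * nrm (a - b).
  move=> [_ a_le] [_ b_le].
  have -> : F a - F b = half *: (a * (a - b) + (a - b) * b).
    by rewrite /F -scalerBr [s + a * a]addrC addrKA mulrBr mulrBl subrKA.
  have ab_ge0 := nrm_ge0 (a - b).
  rewrite nrm_half; apply: le_trans (ler_wpM2l half_ge0 (nrm_triangle _ _)) _.
  apply: le_trans (ler_wpM2l half_ge0 (lerD (nrm_subm _ _) (nrm_subm _ _))) _.
  have := nrm_ge0 a; have := nrm_ge0 b; nra.
have half_lt1 : (0 : R) <= (2^-1 : R) < 1 by apply/andP; split; lra.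
have [l [l_sa _] Fl] := contraction_fixpoint half_lt1 B_closed B0 FB F_contr.
exists l => //.
have two_half : (2%:R : R)%:C * half = 1 by rewrite -rmorphM mulfV ?pnatr_eq0.
have := congr1 (fun v => (2%:R : R)%:C *: v) Fl.
by rewrite /= /F scalerA two_half scale1r rmorph_nat scaler_nat mulr2n.
Qed.

Lemma sqrt_one_sub s : star s = s -> nrm s <= 2^-1 -> exists c, 1 - s = star c * c.
Proof.
move=> s_sa s_le; have [l l_sa ll] := selfadjoint_sqr_fixpoint s_sa s_le.
exists (1 - l); rewrite starB star1 l_sa mulrBl mul1r mulrBr mulr1.
have -> : s = l + l - l * l by rewrite ll addrK.
by rewrite -[RHS]addrA -opprD addrA.
Qed.

Lemma sqnorm2_mulr a y : sqnorm2 (a * y) = complex.Re (tau (star y * (star a * a) * y)).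
Proof. by rewrite /sqnorm2 starM !mulrA. Qed.

Lemma Re_tau_sandwich_le s y : star s = s -> nrm s <= 2^-1 ->
  complex.Re (tau (star y * s * y)) <= sqnorm2 y.
Proof.
move=> s_sa s_le; have [c sE] := sqrt_one_sub s_sa s_le.
have := sqnorm2_ge0 (c * y).
by rewrite sqnorm2_mulr -sE mulrBr mulr1 mulrBl tauB raddfB subr_ge0.
Qed.

Lemma sqnorm2_mull_le c y : sqnorm2 (c * y) <= 2 * nrm c ^+ 2 * sqnorm2 y.
Proof.
have [/nrm_eq0 ->|c_neq0] := eqVneq (nrm c) 0.
  by rewrite mul0r /sqnorm2 star0 mul0r tau0 nrm0 expr0n /= mulr0 mul0r.
have k_gt0 : 0 < 2 * nrm c ^+ 2 by rewrite mulr_gt0 // exprn_gt0 // lt0r c_neq0 nrm_ge0.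
pose r := (2 * nrm c ^+ 2)^-1.
have r_gt0 : 0 < r by rewrite invr_gt0.
have s_sa : star (r%:C *: (star c * c)) = r%:C *: (star c * c).
  by rewrite starZr starM starK.
have s_le : nrm (r%:C *: (star c * c)) <= 2^-1.
  by rewrite nrmZr ?(ltW r_gt0) // nrm_Cstar /r invfM -mulrA mulVf ?mulr1 // expf_neq0.
have := Re_tau_sandwich_le y s_sa s_le.
rewrite -scalerAr -scalerAl tauZ Re_realM -sqnorm2_mulr.
by rewrite -(ler_pM2l k_gt0) mulrA mulfV ?mul1r // gt_eqF.
Qed.

Lemma sqnorm2_le a : sqnorm2 a <= 2 * nrm a ^+ 2.
Proof.
have := sqnorm2_mull_le a 1; rewrite mulr1 => /le_trans; apply.
by rewrite /sqnorm2 star1 mulr1 tau1 /= mulr1.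
Qed.

Lemma sqnorm2_polarization a : sqnorm2 (a + 1) - sqnorm2 (a - 1) = 4 * complex.Re (tau a).
Proof.
rewrite /sqnorm2 starD starB star1.
rewrite !(mulrDl, mulrDr, mulN1r, mulrN1, mul1r, mulr1, opprK, tauD, tauN, raddfD, raddfN) /=.
rewrite tau_star.
have -> : complex.Re ((tau a)^*)%C = complex.Re (tau a) by case: (tau a).
lra.
Qed.

Lemma Re_tau_le a : complex.Re (tau a) <= 2 * nrm a.
Proof.
have [/nrm_eq0 ->|a_neq0] := eqVneq (nrm a) 0; first by rewrite tau0 nrm0 mulr0.
have n_gt0 : 0 < nrm a by rewrite lt0r a_neq0 nrm_ge0.
pose b := (nrm a)^-1%:C *: a.
have b_nrm : nrm b = 1 by rewrite nrmZr ?invr_ge0 ?ltW // mulVf.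
have tau_a : complex.Re (tau a) = nrm a * complex.Re (tau b).
  by rewrite tauZ Re_realM mulrA mulfV ?mul1r.
have b1_le : nrm (b + 1) <= 2 by apply: le_trans (nrm_triangle _ _) _; rewrite b_nrm nrm1; lra.
have tau_b : complex.Re (tau b) <= 2.
  have := sqnorm2_polarization b; have := sqnorm2_le (b + 1); have := sqnorm2_ge0 (b - 1).
  have := nrm_ge0 (b + 1); nra.
by rewrite tau_a mulrC ler_pM2r.
Qed.

Lemma dist_sqnorm2_le a b : `|sqnorm2 a - sqnorm2 b| <= 2 * ((nrm a + nrm b) * nrm (a - b)).
Proof.
have E : star a * a - star b * b = star (a - b) * a + star b * (a - b).
  by rewrite starB mulrBl mulrBr addrA subrK.
have nrmE : nrm (star a * a - star b * b) <= (nrm a + nrm b) * nrm (a - b).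
  rewrite E mulrDl; apply: le_trans (nrm_triangle _ _) _.
  apply: le_trans (lerD (nrm_subm _ _) (nrm_subm _ _)) _.
  by rewrite !nrm_star mulrC [nrm b * _]mulrC.
have := Re_tau_le (star a * a - star b * b); have := Re_tau_le (star b * b - star a * a).
rewrite nrm_distC /sqnorm2 !tauB !raddfB /= => ba ab.
rewrite ler_norml; apply/andP; split; lra.
Qed.

Lemma sqnorm2_continuous (X : topologicalType) (u : X -> A) :
  norm_continuous nrm u -> continuous (sqnorm2 \o u : X -> R^o).
Proof.
move=> u_cont x; apply/cvgrPdist_lt => e e_gt0.
pose K := 2 * (2 * nrm (u x) + 1).
have K_gt0 : 0 < K by rewrite mulr_gt0 // ltr_wpDl ?mulr_ge0 ?nrm_ge0.
have d_gt0 : 0 < Num.min 1 (e / K) by rewrite lt_min ltr01 divr_gt0.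
apply: filterS (u_cont x _ d_gt0) => t; rewrite lt_min => /andP[d_lt1 d_lt].
have ut_le : nrm (u t) <= nrm (u x) + 1.
  have -> : u t = (u t - u x) + u x by rewrite subrK.
  by apply: le_trans (nrm_triangle _ _) _; rewrite addrC lerD2l ltW.
apply: le_lt_trans (dist_sqnorm2_le _ _) _; rewrite nrm_distC.
rewrite ltr_pdivlMr // in d_lt; move: d_lt; rewrite /K.
have := nrm_ge0 (u t - u x); have := nrm_ge0 (u x); nra.
Qed.

Lemma in_star_algB x y z : in_star_alg star x y -> in_star_alg star x z ->
  in_star_alg star x (y - z).
Proof. by move=> xy xz; rewrite -scaleN1r; apply/sa_add/sa_scale. Qed.

Lemma in_star_alg_centred_sqr x (c : R[i]) : in_star_alg star x (star x * x - c *: 1).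
Proof. by apply: in_star_algB; [apply/sa_mul/sa_gen/sa_star | apply/sa_scale/sa_one]. Qed.

Section FreeMoments.
Variables a b : A.
Hypotheses (ab_free : star_free star tau a b) (a_centred : tau a = 0) (b_centred : tau b = 0).

Definition centred_in (s : bool) (x : A) :=
  in_star_alg star (if s then a else b) x /\ tau x = 0.

Fixpoint alternating_centred (s : bool) (w : seq A) : Prop :=
  if w is x :: w' then centred_in s x /\ alternating_centred (~~ s) w' else True.

Lemma alternating_centred_nth s w k : alternating_centred s w -> (k < size w)%N ->
  centred_in (s (+) odd k) (nth 0 w k).
Proof.
elim: w s k => [//|x w IH] s [|k] /= [x_centred w_alt]; first by rewrite addbF.
by move=> k_lt; rewrite addbN -addNb; apply: IH.
Qed.

Lemma tau_prod_alternating s w : alternating_centred s w -> w != [::] ->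
  tau (\prod_(x <- w) x) = 0.
Proof.
case: w => [//|x w] w_alt _; rewrite (big_nth 0) big_mkord.
apply: (@ab_free (size w) (fun k => s (+) odd k) (fun k => nth 0 (x :: w) k)).
- by move=> k k_lt /=; rewrite addbN; case: (_ (+) _).
- by move=> k; case: (alternating_centred_nth w_alt (ltn_ord k)).
- by move=> k; case: (alternating_centred_nth w_alt (ltn_ord k)).
Qed.

Lemma alternating_centred_cat s w1 w2 : alternating_centred s w1 ->
  alternating_centred (s (+) odd (size w1)) w2 -> alternating_centred s (w1 ++ w2).
Proof.
elim: w1 s => [|x w1 IH] s /=; first by rewrite addbF.
by case=> x_centred w1_alt; rewrite addbN -addNb => w2_alt; split=> //; apply: IH.
Qed.

Definition pairs (n : nat) (x y : A) : seq A := flatten (nseq n [:: x; y]).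

Lemma prod_pairs n x y : \prod_(z <- pairs n x y) z = (x * y) ^+ n.
Proof. by elim: n => [|n IH]; rewrite ?big_nil // big_cons big_cons IH exprS mulrA. Qed.

Lemma odd_size_pairs n x y : odd (size (pairs n x y)) = false.
Proof. by elim: n => //= n ->. Qed.

Lemma alternating_centred_pairs s n x y : centred_in s x -> centred_in (~~ s) y ->
  alternating_centred s (pairs n x y).
Proof. by move=> x_centred y_centred; elim: n => //= n IH; rewrite negbK. Qed.

Lemma centred_generator s : centred_in s (if s then a else b).
Proof. by case: s; split=> //; apply: sa_gen. Qed.

Lemma centred_star_generator s : centred_in s (star (if s then a else b)).
Proof.
by case: s; split; rewrite ?tau_star ?a_centred ?b_centred ?conjc0 //; apply: sa_star.
Qed.

Lemma centred_sqr_generator s (x := if s then a else b) :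
  centred_in s (star x * x - (sqnorm2 x)%:C *: 1).
Proof.
split; first exact: in_star_alg_centred_sqr.
by rewrite tauB tauZ tau1 mulr1 tau_sqnorm2 subrr.
Qed.

Lemma tau_pairs_sandwich m n w : alternating_centred false w -> odd (size w) ->
  tau (star (a * b) ^+ m * \prod_(z <- w) z * (a * b) ^+ n) = 0.
Proof.
move=> w_alt w_odd.
have <- : \prod_(z <- pairs m (star b) (star a) ++ w ++ pairs n a b) z =
    star (a * b) ^+ m * \prod_(z <- w) z * (a * b) ^+ n.
  by rewrite !big_cat /= !prod_pairs starM mulrA.
apply: (@tau_prod_alternating false); last first.
  by case: w w_alt w_odd => // x w _ _; rewrite -size_eq0 !size_cat /= addSn addnS.
apply: alternating_centred_cat.
  exact: alternating_centred_pairs (centred_star_generator false) (centred_star_generator true).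
rewrite odd_size_pairs; apply: alternating_centred_cat => //; rewrite w_odd.
exact: alternating_centred_pairs (centred_generator true) (centred_generator false).
Qed.

Lemma tau_moments m n : tau (star (a * b) ^+ m * (a * b) ^+ n) =
  if m == n then ((sqnorm2 a * sqnorm2 b) ^+ n)%:C else 0.
Proof.
pose a0 := star a * a - (sqnorm2 a)%:C *: 1; pose b0 := star b * b - (sqnorm2 b)%:C *: 1.
have a0_centred : centred_in true a0 := centred_sqr_generator true.
have b0_centred : centred_in false b0 := centred_sqr_generator false.
have aE : star a * a = (sqnorm2 a)%:C *: 1 + a0 by rewrite addrC subrK.
have bE : star b * b = (sqnorm2 b)%:C *: 1 + b0 by rewrite addrC subrK.
clearbody a0 b0.
elim: m n => [|m IH] [|n].
- by rewrite !expr0 mul1r tau1.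
- rewrite expr0 mul1r -prod_pairs; apply: (@tau_prod_alternating true) => //.
  exact: alternating_centred_pairs (centred_generator true) (centred_generator false).
- rewrite expr0 mulr1 starM -prod_pairs; apply: (@tau_prod_alternating false) => //.
  exact: alternating_centred_pairs (centred_star_generator false) (centred_star_generator true).
have tau_b0 : tau (star (a * b) ^+ m * b0 * (a * b) ^+ n) = 0.
  by have := @tau_pairs_sandwich m n [:: b0]; rewrite big_seq1; apply.
have tau_a0 : tau (star (a * b) ^+ m * (star b * a0 * b) * (a * b) ^+ n) = 0.
  have := @tau_pairs_sandwich m n [:: star b; a0; b].
  rewrite !big_cons big_nil /= mulr1 !mulrA; apply=> //.
  split; first exact: centred_star_generator false.
  by split; last exact: conj (centred_generator false) I.
have -> : star (a * b) ^+ m.+1 * (a * b) ^+ n.+1 =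
    star (a * b) ^+ m * (star b * (star a * a) * b) * (a * b) ^+ n.
  by rewrite exprSr exprS starM !mulrA.
have -> : star b * (star a * a) * b =
    (sqnorm2 a * sqnorm2 b)%:C *: 1 + (sqnorm2 a)%:C *: b0 + star b * a0 * b.
  by rewrite aE mulrDr -scalerAr mulr1 mulrDl -scalerAl bE scalerDr scalerA rmorphM.
rewrite !mulrDr !mulrDl -!scalerAr mulr1 -!scalerAl !tauD !tauZ tau_b0 tau_a0 IH eqSS.
by case: (m == n); rewrite ?mulr0 ?addr0 // exprS [in RHS]rmorphM.
Qed.

End FreeMoments.

Lemma sqnorm2_orthonormal_sum (P : A) N :
  (forall m n, tau (star P ^+ m * P ^+ n) = (m == n)%:R) ->
  sqnorm2 (\sum_(n < N) P ^+ n) = N%:R.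
Proof.
move=> P_orth; rewrite /sqnorm2 star_sum mulr_suml tau_sum.
transitivity (complex.Re (\sum_(m < N) (1 : R[i]))); last by rewrite sumr_const card_ord raddfMn.
congr complex.Re; apply: eq_bigr => m _.
rewrite mulr_sumr tau_sum (bigD1 m) //= starX P_orth eqxx big1 ?addr0 // => n nm.
by rewrite P_orth eq_sym val_eqE (negbTE nm).
Qed.

Lemma sqnorm2M_neq1 a b : star_free star tau a b -> tau a = 0 -> tau b = 0 ->
  invertible (1 - a * b) -> sqnorm2 a * sqnorm2 b != 1.
Proof.
move=> ab_free a_centred b_centred [c [_ c_inv]]; apply/eqP => ab1.
set P := a * b.
have P_orth m n : tau (star P ^+ m * P ^+ n) = (m == n)%:R.
  by rewrite tau_moments // ab1 expr1n; case: (m == n).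
pose N := (Num.trunc (4 * nrm c ^+ 2)).+1.
have S_eq : \sum_(n < N) P ^+ n = c * (1 - P ^+ N).
  by rewrite -[1 - _]opprB subrX1 -mulNr opprB mulrA c_inv mul1r.
have y_sqnorm2 : sqnorm2 (1 - P ^+ N) = 2.
  rewrite /sqnorm2 starB star1 starX mulrBl mul1r !mulrBr !mulr1 !tauB tau1.
  have := P_orth 0%N N; have := P_orth N 0%N; have := P_orth N N.
  rewrite !expr0 mulr1 mul1r eqxx => -> -> ->.
  by rewrite /N /= subr0 sub0r opprK.
have := sqnorm2_mull_le c (1 - P ^+ N).
rewrite -S_eq sqnorm2_orthonormal_sum // y_sqnorm2.
have := truncnS_gt (4 * nrm c ^+ 2); rewrite -/N; lra.
Qed.

Lemma norm2M_lt1 a b :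
  (norm2 star tau a * norm2 star tau b < 1) = (sqnorm2 a * sqnorm2 b < 1).
Proof. by rewrite -sqrtrM ?sqnorm2_ge0 // -{1}sqrtr1 ltr_sqrt. Qed.

End TracialCstarAlgebra.

Theorem corollary3p2 (R : realType) (A : algType R[i])
    (star : A -> A) (nrm : A -> R) (tau : A -> R[i])
    (HA : tracial_Wstar_probability_space star nrm tau)
    (X : topologicalType) (u1 u2 : X -> A)
    (Hu1 : norm_continuous nrm u1) (Hu2 : norm_continuous nrm u2)
    (Hfree : forall x, star_free star tau (u1 x) (u2 x))
    (Htau1 : forall x, tau (u1 x) = 0) (Htau2 : forall x, tau (u2 x) = 0)
    (Hinv : forall x, invertible (1 - u1 x * u2 x)) :
  let Y := [set x : X | norm2 star tau (u1 x) * norm2 star tau (u2 x) < 1] in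
  (open Y /\ closed Y) /\ (connected [set: X] -> Y = [set: X] \/ Y = set0).
Proof.
move=> Y; case: HA => Hstar Hnrm Hcomplete Htau _.
pose g x : R^o := sqnorm2 star tau (u1 x) * sqnorm2 star tau (u2 x).
have Y_preimage : Y = g @^-1` [set r | r < 1].
  by apply/seteqP; split=> x; rewrite /Y /= norm2M_lt1.
have Y_clopen : clopen Y.
  rewrite Y_preimage; apply: clopen_preimage_lt => x.
    by apply: continuousM; apply: (sqnorm2_continuous Hstar Hnrm Hcomplete Htau).
  exact: (sqnorm2M_neq1 Hstar Hnrm Hcomplete Htau (Hfree x) (Htau1 x) (Htau2 x) (Hinv x)).
by split=> // X_connected; apply: connected_clopen.
Qed.
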